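(* Let $E$ be a (Hausdorff, real) topological vector space and $A\subseteq E\setminus\{0\}$. The following are equivalent: (i) the linear Kalton map $lK_A:lS_A\to E$ is continuous; (ii) the Kalton map $K_A:S_A\to E$ is continuous; (iii) the set $A$ is absolutely Cauchy summable.
   Context: For $a\in E$, $\langle a\rangle$ denotes the additive cyclic subgroup generated by $a$ and $\mathbb{R}a=\{ra:r\in\mathbb{R}\}$, both with the subspace topology. $S_A=\bigoplus_{a\in A}\langle a\rangle$ and $lS_A=\bigoplus_{a\in A}\mathbb{R}a$ denote the finitely supported elements of $\prod_{a\in A}\langle a\rangle$, resp. $\prod_{a\in A}\mathbb{R}a$, with the subspace topology of the Tychonoff product topology. The Kalton map $K_A:S_A\to E$ is the unique group homomorphism extending each inclusion $\langle a\rangle\to E$, and the linear Kalton map $lK_A:lS_A\to E$ is the unique linear map extending each inclusion $\mathbb{R}a\to E$. $A$ is absolutely Cauchy summable if for every neighbourhood $U$ of $0$ there is a finite $F\subseteq A$ such that the additive subgroup generated by $A\setminus F$ is contained in $U$. *)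

From HB Require Import structures.
From mathcomp Require Import all_boot all_order all_algebra.
From mathcomp Require Import all_classical all_reals all_analysis.
Set Implicit Arguments. Unset Strict Implicit. Unset Printing Implicit Defensive.
Import Order.TTheory GRing.Theory Num.Theory.
Local Open Scope classical_set_scope.
Local Open Scope ring_scope.

(* Real topological vector spaces are modelled by [topologicalLmodType R]
   (continuous addition and jointly continuous scalar multiplication) over
   a [realType] R.  Elements of prod_{a in A} E are functions
   [set_type A -> E] with the product (pointwise) topology [{ptws _ -> _}]. *)

Section Kalton.
Context {R : realType} {E : topologicalLmodType R} (A : set E).

Definition prodA := {ptws set_type A -> E}.

Definition finsupp (f : prodA) : Prop := finite_set [set i | f i != 0].

Definition S_A : set prodA :=
  [set f | finsupp f /\ forall i : set_type A, exists z : int, f i = (val i) *~ z].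

Definition lS_A : set prodA :=
  [set f | finsupp f /\ forall i : set_type A, exists r : R, f i = r *: (val i)].

(* the (linear) Kalton map: sum of the (finitely many nonzero) coordinates;
   K_A is its restriction to S_A, lK_A its restriction to lS_A *)
Definition kalton (f : prodA) : E := \sum_(i \in [set: set_type A]) f i.

End Kalton.
Arguments finsupp {R E} A f.
Arguments S_A {R E} A.
Arguments lS_A {R E} A.
Arguments kalton {R E} A f.


Section Summable.
Context {R : realType} {E : topologicalLmodType R}.

Definition is_add_subgroup (G : set E) : Prop :=
  G 0 /\ forall x y, G x -> G y -> G (x - y).

Definition add_subgroup_gen (B : set E) : set E :=
  \bigcap_(G in [set G | is_add_subgroup G /\ B `<=` G]) G.

Definition abs_cauchy_summable (A : set E) : Prop :=
  forall U : set E, nbhs (0 : E) U ->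
    exists F : set E, [/\ finite_set F, F `<=` A & add_subgroup_gen (A `\` F) `<=` U].

End Summable.

From HB Require Import structures.
From mathcomp Require Import all_boot all_order all_algebra.
From mathcomp Require Import all_classical all_reals all_analysis.
Local Open Scope classical_set_scope.
Local Open Scope ring_scope.
Import Order.TTheory GRing.Theory Num.Theory.

(* (i) => (ii) is restriction along [S_A A `<=` lS_A A].
   (ii) => (iii): continuity of the Kalton map at 0 yields finitely many
   coordinates J such that every element of S_A vanishing on J is mapped into
   U.  Those images form an additive subgroup containing each a in A outside J,
   hence the subgroup generated by A minus those finitely many points.
   (iii) => (i): for g near f in lS_A, K g - K f is a sum of finitely many
   small coordinate differences and of a real combination of points of A \ F.
   Once the subgroup generated by A \ F lies in a small enough neighbourhood W,
   every real combination of its points is small. *)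

Section TvsNeighbourhoods.
Context {R : realType} {E : topologicalLmodType R}.

Lemma nbhs0_half (U : set E) : nbhs 0 U ->
  exists2 V, nbhs 0 V & forall x y, V x -> V y -> U (x + y).
Proof.
move=> U0; have := @add_continuous E (0, 0).
rewrite /continuous_at /= addr0 => /(_ U U0) [[P Q] /= [P0 Q0] PQ].
exists (P `&` Q); first exact: filterI.
by move=> x y [Px _] [_ Qy]; apply: (PQ (x, y)).
Qed.

Lemma nbhs_translate0 (c : E) (U : set E) :
  nbhs c U -> nbhs 0 [set z | U (c + z)].
Proof.
move=> Uc; have := @add_continuous E (c, 0).
rewrite /continuous_at /= addr0 => /(_ U Uc) [[P Q] /= [P0 Q0] PQ].
by apply: filterS Q0 => z Qz; apply: (PQ (c, z)); split => //; exact: nbhs_singleton.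
Qed.

Lemma nbhs0_translate (c : E) (U : set E) :
  nbhs 0 U -> nbhs c [set y | U (y - c)].
Proof.
move=> U0; have := @sub_continuous E (c, c).
rewrite /continuous_at /= subrr => /(_ U U0) [[P Q] /= [P0 Q0] PQ].
by apply: filterS P0 => z Pz; apply: (PQ (z, c)); split => //; exact: nbhs_singleton.
Qed.

Lemma scaler_small_nbhs0 (V : set E) : nbhs 0 V ->
  exists2 d : R, 0 < d & exists2 W, nbhs 0 W &
    forall t w, `|t| < d -> W w -> V (t *: w).
Proof.
move=> V0; have := @scale_continuous R E (0, 0).
rewrite /continuous_at /= scale0r => /(_ V V0) [[P Q] /= [P0 Q0] PQ].
have [d d0 Pd] := (nbhs_ballP _ _).1 P0.
exists d => //; exists Q => // t w td Qw; apply: (PQ (t, w)); split => //=.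
by apply: Pd; rewrite /ball /= sub0r normrN.
Qed.

Lemma scaler_small (a : E) (V : set E) : nbhs 0 V ->
  exists2 d : R, 0 < d & forall t : R, `|t| < d -> V (t *: a).
Proof.
move=> V0; have := @scale_continuous R E (0, a).
rewrite /continuous_at /= scale0r => /(_ V V0) [[P Q] /= [P0 Q0] PQ].
have [d d0 Pd] := (nbhs_ballP _ _).1 P0.
exists d => // t td; apply: (PQ (t, a)); split => /=; last exact: nbhs_singleton.
by apply: Pd; rewrite /ball /= sub0r normrN.
Qed.

Lemma combination_small {X : eqType} (s : seq X) (b : X -> E) (V : set E) :
  nbhs 0 V -> exists2 d : R, 0 < d & forall e : X -> R,
    (forall x, x \in s -> `|e x| < d) -> V (\sum_(x <- s) e x *: b x).
Proof.
elim: s V => [|x s IHs] V V0.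
  by exists 1 => // e _; rewrite big_nil; exact: nbhs_singleton.
have [W W0 WW] := nbhs0_half _ V0.
have [d1 d10 Wd1] := scaler_small (b x) _ W0.
have [d2 d20 Wd2] := IHs W W0.
exists (Order.min d1 d2) => [|e small_e]; first by rewrite lt_min d10 d20.
have {}small_e y : y \in x :: s -> `|e y| < d1 /\ `|e y| < d2.
  by move=> /small_e; rewrite lt_min => /andP.
rewrite big_cons; apply: WW; first by apply: Wd1; case: (small_e x (mem_head _ _)).
by apply: Wd2 => y ys; case: (small_e y); rewrite // in_cons ys orbT.
Qed.

End TvsNeighbourhoods.

Section AdditiveSubgroups.
Context {R : realType} {E : topologicalLmodType R}.
Implicit Types (B G : set E).

Lemma add_subgroupN G x : is_add_subgroup G -> G x -> G (- x).
Proof. by move=> [G0 GB] Gx; rewrite -sub0r; apply: GB. Qed.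

Lemma add_subgroupD G x y : is_add_subgroup G -> G x -> G y -> G (x + y).
Proof.
by move=> hG Gx Gy; rewrite -[y]opprK; apply: hG.2 => //; exact: add_subgroupN.
Qed.

Lemma add_subgroupMz G x z : is_add_subgroup G -> G x -> G (x *~ z).
Proof.
move=> hG Gx; have GMn n : G (x *+ n).
  by elim: n => [|n IHn]; [exact: hG.1 | rewrite mulrS; exact: add_subgroupD].
case: z => n; first exact: GMn.
by rewrite NegzE mulrNz; apply: add_subgroupN => //; apply: GMn.
Qed.

Lemma add_subgroup_gen_min B G : is_add_subgroup G -> B `<=` G ->
  add_subgroup_gen B `<=` G.
Proof. by move=> hG BG x; apply. Qed.

Lemma add_subgroup_gen_sum B {X : eqType} (s : seq X) (b : X -> E)
    (z : X -> int) :
  (forall x, x \in s -> B (b x)) -> add_subgroup_gen B (\sum_(x <- s) b x *~ z x).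
Proof.
move=> Bb G [hG BG]; rewrite big_seq.
apply: (big_ind G); [exact: hG.1 | by move=> x y; apply: add_subgroupD |].
by move=> x xs; apply: add_subgroupMz => //; apply/BG/Bb.
Qed.

End AdditiveSubgroups.

Lemma floor_divr_approx {F : archiRealFieldType} (N r : F) : 0 < N ->
  0 <= r - (Num.floor (N * r))%:~R / N < N^-1.
Proof.
move=> N0; set n := Num.floor (N * r).
have -> : r - n%:~R / N = (N * r - n%:~R) / N.
  by rewrite mulrBl mulrAC mulfV ?gt_eqF // mul1r.
have /andP[nle ltn1] := floor_itv (N * r); rewrite -/n intrD mulr1z in nle ltn1.
rewrite divr_ge0 ?subr_ge0 ?(ltW N0) //=.
by rewrite ltr_pdivrMr // mulVf ?gt_eqF // ltrBlDl.
Qed.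

Section RealSpan.
Context {R : realType} {E : topologicalLmodType R}.

(* Writing [r = n / N + (r - n / N)] with [n] the floor of [N r], a real
   combination becomes [N^-1] times an integer combination plus a
   combination with coefficients smaller than [N^-1]. *)
Lemma real_span_small (U : set E) : nbhs 0 U -> exists2 W, nbhs 0 W &
  forall B : set E, add_subgroup_gen B `<=` W ->
  forall (X : eqType) (s : seq X) (r : X -> R) (b : X -> E),
    (forall x, x \in s -> B (b x)) -> U (\sum_(x <- s) r x *: b x).
Proof.
move=> U0; have [V V0 VV] := nbhs0_half _ U0.
have [d d0 [W W0 VW]] := scaler_small_nbhs0 _ V0.
exists W => // B BW X s r b Bb.
have [eps eps0 Veps] := combination_small s b _ V0.
set N : R := (Num.truncn (Order.min d eps)^-1).+1%:R.
have N0 : 0 < N by rewrite ltr0n.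
have /andP[Nd Neps] : (N^-1 < d) && (N^-1 < eps).
  by rewrite -lt_min invf_plt ?posrE ?lt_min ?d0 ?eps0 //; exact: truncnS_gt.
set n := fun x => Num.floor (N * r x).
have -> : \sum_(x <- s) r x *: b x = N^-1 *: (\sum_(x <- s) b x *~ n x)
    + \sum_(x <- s) (r x - (n x)%:~R / N) *: b x.
  rewrite scaler_sumr -big_split /=; apply: eq_bigr => x _.
  by rewrite -scaler_int scalerA -scalerDl mulrC addrC subrK.
apply: VV.
  apply: VW; first by rewrite gtr0_norm ?invr_gt0.
  by apply: BW; apply: add_subgroup_gen_sum.
apply: Veps => x _; have /andP[ge0 ltN] := floor_divr_approx _ (r x) N0.
by rewrite ger0_norm // (lt_trans ltN).
Qed.

End RealSpan.

Section Kalton.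
Context {R : realType} {E : topologicalLmodType R} (A : set E).
Local Notation I := (set_type A).
Implicit Types (f g h : prodA A) (J : set I).

Lemma prodA_subE g h i : (g - h) i = g i - h i.
Proof. by []. Qed.

Definition supp f : set I := [set i | f i != 0].

Lemma suppB g h : supp (g - h) `<=` supp g `|` supp h.
Proof.
move=> i; rewrite /supp /= prodA_subE => ghi.
have [g0|] := eqVneq (g i) 0; last by left.
by right; apply: contra_neq ghi => h0; rewrite g0 h0 subrr.
Qed.

Lemma finsuppB g h : finsupp A g -> finsupp A h -> finsupp A (g - h).
Proof. by move=> fg fh; apply: sub_finite_set (@suppB g h) _; rewrite finite_setU. Qed.

Lemma kalton_fsbigE h J : supp h `<=` J -> kalton A h = \sum_(i \in J) h i.
Proof.
move=> hJ; rewrite /kalton (fsbig_widen J setT) // => i [_ /= Ji].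
by apply/eqP; apply: contrapT => /negP /hJ.
Qed.

Lemma kaltonB g h : finsupp A g -> finsupp A h ->
  kalton A (g - h) = kalton A g - kalton A h.
Proof.
move=> fg fh; have fJ : finite_set (supp g `|` supp h) by rewrite finite_setU.
rewrite !(@kalton_fsbigE _ (supp g `|` supp h));
  [|exact: subsetUr | exact: subsetUl | exact: suppB].
by rewrite !fsbig_finite //= sumrB.
Qed.

Lemma S_A_sub_lS_A : S_A A `<=` lS_A A.
Proof.
move=> g [fg Sg]; split => // i; have [z ->] := Sg i.
by exists z%:~R; rewrite scaler_int.
Qed.

Lemma S_A0 : S_A A 0.
Proof.
split=> [|i]; last by exists 0; rewrite mulr0z.
by apply: sub_finite_set (finite_set0 I) => i /=; rewrite eqxx.
Qed.

Lemma S_AB g h : S_A A g -> S_A A h -> S_A A (g - h).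
Proof.
move=> [fg Sg] [fh Sh]; split; first exact: finsuppB.
move=> i; have [m gi] := Sg i; have [n hi] := Sh i.
by exists (m - n); rewrite mulrzBr -gi -hi.
Qed.

Lemma kalton0 : kalton A 0 = 0.
Proof. by rewrite /kalton fsbig1. Qed.

Definition unit_at (j : I) : prodA A := fun i => if i == j then val i else 0.

Lemma supp_unit_at j : supp (unit_at j) `<=` [set j].
Proof. by move=> i; rewrite /supp /unit_at /=; case: (i =P j) => //= _; rewrite eqxx. Qed.

Lemma S_A_unit_at j : S_A A (unit_at j).
Proof.
split=> [|i]; first exact: sub_finite_set (@supp_unit_at j) (finite_set1 j).
by exists (i == j)%:Z; rewrite /unit_at; case: (i =P j).
Qed.

Lemma kalton_unit_at j : kalton A (unit_at j) = val j.
Proof.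
by rewrite (@kalton_fsbigE _ _ (@supp_unit_at j)) fsbig_set1 /unit_at eqxx.
Qed.

Definition vanish_on J : set (prodA A) := [set g | forall i, J i -> g i = 0].

Lemma nbhs0_vanish_on (W : set (prodA A)) : nbhs (0 : prodA A) W ->
  exists2 J, finite_set J & vanish_on J `<=` W.
Proof.
pose F := filter_from finite_set vanish_on.
have F_filter : Filter F.
  apply: filter_from_filter; first by exists set0; exact: finite_set0.
  move=> J1 J2 fJ1 fJ2; exists (J1 `|` J2); first by rewrite finite_setU.
  by move=> g g0; split => i Ji; apply: g0; [left|right].
have : F --> (0 : prodA A).
  apply/cvg_sup => i Q /=.
  rewrite (@nbhsE (initial_topology (fun f : prodA A => f i))) => -[B [[C oC CB] B0] BQ].
  exists [set i]; first exact: finite_set1.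
  move=> g gi; apply: BQ; rewrite -CB /= in B0 *.
  by rewrite (gi i erefl).
by move=> /[apply] -[J fJ JW]; exists J.
Qed.

Definition kalton_vanishing J : set E := kalton A @` (S_A A `&` vanish_on J).

Lemma kalton_vanishing_subgroup J : is_add_subgroup (kalton_vanishing J).
Proof.
split; first by exists 0; [split; [exact: S_A0 | by []] | exact: kalton0].
move=> _ _ [g [Sg g0] <-] [h [Sh h0] <-]; exists (g - h).
  by split; [exact: S_AB | move=> i Ji; rewrite prodA_subE g0 // h0 // subrr].
by rewrite kaltonB //; [case: Sg | case: Sh].
Qed.

Lemma kalton_vanishing_gen J :
  add_subgroup_gen (A `\` val @` J) `<=` kalton_vanishing J.
Proof.
apply: add_subgroup_gen_min; first exact: kalton_vanishing_subgroup.
move=> a [Aa notJa]; pose j : I := exist _ a (mem_set Aa).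
exists (unit_at j); last exact: kalton_unit_at.
split; first exact: S_A_unit_at.
move=> i Ji; rewrite /unit_at; case: (i =P j) =>//= ij.
by exfalso; apply: notJa; exists i; rewrite // ij.
Qed.

Lemma kalton_continuous_abs_cauchy_summable :
  {within S_A A, continuous (kalton A)} -> abs_cauchy_summable A.
Proof.
move=> kalton_cont U U0.
have := (subspace_continuousP _ _).1 kalton_cont _ S_A0 U.
rewrite /from_subspace kalton0 => /(_ U0) /nbhs0_vanish_on [J fJ JU].
exists (val @` J); split; [exact: finite_image | by move=> _ [i _ <-]; exact: set_valP |].
by move=> x /kalton_vanishing_gen [g [Sg g0] <-]; apply: JU.
Qed.

Lemma near_coord_sum f (s : seq I) (V : set E) : nbhs 0 V ->
  nbhs f [set g : prodA A | V (\sum_(i <- s) (g i - f i))].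
Proof.
elim: s V => [|i s IHs] V V0.
  by apply: filterS filterT => g _ /=; rewrite big_nil; exact: nbhs_singleton.
have [W W0 WW] := nbhs0_half _ V0.
have near_i : nbhs f [set g : prodA A | W (g i - f i)].
  exact: (@proj_continuous I (fun=> E) i f _ (nbhs0_translate (f i) _ W0)).
apply: filterS (filterI near_i (IHs W W0)) => g [Wi Ws] /=.
by rewrite big_cons; exact: WW.
Qed.

Lemma kaltonB_split f g J : finite_set J -> supp f `<=` J -> finsupp A g ->
  kalton A g - kalton A f =
    \sum_(i \in J) (g i - f i) + \sum_(i \in supp g `\` J) g i.
Proof.
move=> fJ fsJ fg; have ff : finsupp A f := sub_finite_set fsJ fJ.
have fK : finite_set (supp g `\` J) by exact: finite_setD.
rewrite -kaltonB // (@kalton_fsbigE _ (J `|` (supp g `\` J))); last first.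
  move=> i /suppB [gi|/fsJ Ji]; last by left.
  by have [Ji|notJi] := pselect (J i); [left|right].
rewrite fsbigU // => [|i [Ji [_ /(_ Ji) []]]].
congr (_ + _); apply: eq_fsbigr => i /set_mem [_ notJi].
rewrite prodA_subE; suff -> : f i = 0 by rewrite subr0.
by apply/eqP; apply: contrapT => /negP /fsJ.
Qed.

Lemma abs_cauchy_summable_kalton_continuous :
  abs_cauchy_summable A -> {within lS_A A, continuous (kalton A)}.
Proof.
move=> summable; apply/subspace_continuousP => f [ff lSf] U /= Uf.
rewrite /from_subspace in Uf *.
have [V V0 VV] := nbhs0_half _ (nbhs_translate0 _ _ Uf).
have [W W0 VW] := real_span_small _ V0.
have [F [fF FA FW]] := summable W W0.
pose J := val @^-1` F `|` supp f.
have fJ : finite_set J.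
  by rewrite finite_setU; split=> //; apply: finite_preimage => // ? ? ? ?; exact: val_inj.
apply: filterS (near_coord_sum f (finmap.enum_fset (fset_set J)) _ V0).
move=> g Vg [fg lSg] /=.
rewrite -(subrK (kalton A f) (kalton A g)) addrC.
rewrite (kaltonB_split f g J fJ) //; last exact: subsetUr.
apply: VV; first by rewrite fsbig_finite.
have [r gr] := choice lSg.
rewrite fsbig_finite /=; last exact: finite_setD.
rewrite big_seq (eq_bigr (fun i => r i *: val i)) -?big_seq //.
apply: (VW _ FW) => i; rewrite in_fset_set ?inE; last exact: finite_setD.
by move=> [_ notJi]; split; [exact: set_valP | move=> Fi; apply: notJi; left].
Qed.

End Kalton.

Theorem proposition10p1 (R : realType) (E : topologicalLmodType R)
  (hE : hausdorff_space E) (A : set E) (hA0 : ~ A 0) :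
  ({within (lS_A A), continuous (kalton A)} <->
   {within (S_A A), continuous (kalton A)}) /\
  ({within (S_A A), continuous (kalton A)} <-> abs_cauchy_summable A).
Proof.
have i_ii := continuous_subspaceW (@S_A_sub_lS_A R E A) (f := kalton A).
have ii_iii := @kalton_continuous_abs_cauchy_summable R E A.
have iii_i := @abs_cauchy_summable_kalton_continuous R E A.
split; split.
- exact: i_ii.
- by move=> /ii_iii /iii_i.
- exact: ii_iii.
- by move=> /iii_i /i_ii.
Qed.
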